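(* Let $V=\{v_0,\dots,v_{L-1}\}$ be a set of $L\ge1$ boolean variables and let $n_0,\dots,n_t$ ($t\ge1$) be a sequence of nodes, node $n_j$ carrying a state $s_j:V\to\{0,1\}$ (distinct nodes may carry equal states). Let the child node be $n^c=n_t$ and let the parent node be $n^p=n_k$ for some $k\in\{0,\dots,t-1\}$, and suppose the states of $n^p$ and $n^c$ differ in exactly $e$ variables. For a node $n=n_m$ in the sequence, define $$\alpha_{0:t}(n)=\frac{1}{t}\sum_{i\in\{0,\dots,t\},\,i\neq m}\delta(n,n_i),\qquad \delta(n_m,n_i)=\frac{1}{L}\sum_{l=0}^{L-1}\mathbf{1}_{s_m(v_l)\neq s_i(v_l)}.$$ Then $$\alpha_{0:t}(n^p)-\frac{t-1}{t}\frac{e}{L}\le\alpha_{0:t}(n^c)\le\alpha_{0:t}(n^p)+\frac{t-1}{t}\frac{e}{L}.$$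
   Context: $\delta$ is the normalized Hamming distance between the states of two nodes; $\alpha_{0:t}(n)$ is the average normalized Hamming distance of a node of the sequence to all other nodes of the sequence. The $e$ variables on which parent and child differ are called the effects. *)

From mathcomp Require Import all_boot all_order all_algebra.
Set Implicit Arguments. Unset Strict Implicit. Unset Printing Implicit Defensive.
Import Order.TTheory GRing.Theory Num.Theory.
Local Open Scope ring_scope.

Definition state (L : nat) := {ffun 'I_L -> bool}.

Definition delta (R : realFieldType) (L : nat) (a b : state L) : R :=
  (#|[set l : 'I_L | a l != b l]|%:R) / L%:R.

Definition alpha (R : realFieldType) (L t : nat) (s : 'I_t.+1 -> state L)
    (m : 'I_t.+1) : R :=
  (\sum_(i < t.+1 | i != m) delta R (s m) (s i)) / t%:R.

From mathcomp Require Import all_boot all_order all_algebra.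
Set Implicit Arguments.
Unset Strict Implicit.
Import Order.TTheory GRing.Theory Num.Theory.
Local Open Scope ring_scope.

(* The sums of distances from the child and from the parent to the other nodes
   share all terms except the parent-child distance itself, and by the triangle
   inequality each of the remaining t - 1 pairs of terms differ by at most
   delta(parent, child). *)

Section TotalDistance.

Variables (R : realDomainType) (I : finType) (d : I -> I -> R).
Hypothesis d_sym : forall x y, d x y = d y x.
Hypothesis d_triangle : forall x y z, d x z <= d x y + d y z.

Definition total_dist (x : I) : R := \sum_(i | i != x) d x i.

Lemma dist_lipschitz x y z : `|d x z - d y z| <= d x y.
Proof.
rewrite ler_distl lerBlDr; apply/andP; split.
- by rewrite addrC [d x y]d_sym; exact: d_triangle.
- by rewrite addrC; exact: d_triangle.
Qed.

Lemma total_dist_lipschitz p c : p != c ->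
  `|total_dist c - total_dist p| <= (#|I| - 2)%:R * d p c.
Proof.
move=> npc; pose P i := (i != p) && (i != c).
have -> : total_dist c - total_dist p = \sum_(i | P i) (d c i - d p i).
  rewrite /total_dist (bigD1 p) // [X in _ - X](bigD1 c) 1?eq_sym //= d_sym.
  rewrite opprD addrACA subrr add0r sumrB.
  by congr (_ - _); apply: eq_bigl => i; rewrite /P andbC.
have cardP : #|P| = (#|I| - 2)%N.
  have -> : #|P| = #|~: [set p; c]| by apply: eq_card => i; rewrite !inE negb_or.
  by rewrite cardsCs setCK cards2 npc.
rewrite -cardP mulr_natl -sumr_const (le_trans (ler_norm_sum _ _ _)) //.
by apply: ler_sum => i _; rewrite [d p c]d_sym; exact: dist_lipschitz.
Qed.

End TotalDistance.

Lemma delta_sym (R : realFieldType) L (a b : state L) :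
  delta R a b = delta R b a.
Proof.
by rewrite /delta; congr (_%:R / _); apply: eq_card => l; rewrite !inE eq_sym.
Qed.

Lemma delta_triangle (R : realFieldType) L (a b c : state L) :
  delta R a c <= delta R a b + delta R b c.
Proof.
rewrite /delta -mulrDl ler_wpM2r ?invr_ge0 ?ler0n // -natrD ler_nat.
apply: leq_trans (leq_card_setU _ _); apply: subset_leq_card.
by apply/subsetP => l; rewrite !inE; case: (a l); case: (b l); case: (c l).
Qed.

Theorem theorem4 (R : realFieldType) (L t : nat) (s : 'I_t.+1 -> state L)
    (k : 'I_t.+1) (e : nat) :
  (1 <= L)%N -> (1 <= t)%N -> (k < t)%N ->
  #|[set l : 'I_L | s k l != s ord_max l]| = e ->
  alpha R s k - (t%:R - 1) / t%:R * (e%:R / L%:R) <= alpha R s ord_max /\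
  alpha R s ord_max <= alpha R s k + (t%:R - 1) / t%:R * (e%:R / L%:R).
Proof.
move=> _ t_gt0 k_lt_t <-.
pose d i j := delta R (s i) (s j).
have k_neq_max : k != ord_max by rewrite -val_eqE /= ltn_eqF.
have := total_dist_lipschitz (fun i j => delta_sym R (s i) (s j))
  (fun i j l => delta_triangle R (s i) (s j) (s l)) k_neq_max.
rewrite card_ord subSS natrB // => lip.
apply/andP; rewrite -ler_distl.
have -> : alpha R s ord_max - alpha R s k =
    (total_dist d ord_max - total_dist d k) / t%:R by rewrite mulrBl.
rewrite normrM [X in _ * X]ger0_norm ?invr_ge0 ?ler0n // mulrAC.
by rewrite ler_wpM2r ?invr_ge0 ?ler0n //; exact: lip.
Qed.
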